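(* Let $\mathcal{X}$ be a finite set of $n$ items and consider the (full-rank) context dependent random utility model (CDM) on $\mathcal{X}$ with parameter vector $u=(u_{xz})_{x\neq z}\in\mathbb{R}^{n(n-1)}$. Let $\mathcal{C}_{\mathcal{D}}$ be the collection of distinct choice sets appearing in a dataset $\mathcal{D}$. Suppose there are two distinct sizes $k\neq k'$ with $2\le k,k'\le n$, at least one of which is not in $\{2,n\}$, such that $\mathcal{C}_{\mathcal{D}}$ contains every subset of $\mathcal{X}$ of size $k$ and every subset of $\mathcal{X}$ of size $k'$. Then the CDM is identifiable from $\mathcal{D}$: if $u,u'\in\mathbb{R}^{n(n-1)}$ satisfy $P_u(x\mid C)=P_{u'}(x\mid C)$ for all $C\in\mathcal{C}_{\mathcal{D}}$ and all $x\in C$, then $u'-u=\alpha\mathbf{1}$ for some $\alpha\in\mathbb{R}$.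
   Context: A CDM on a finite universe $\mathcal{X}$ of $n$ items has one real parameter $u_{xz}$ for each ordered pair of distinct items $x\neq z$; collect them into $u\in\mathbb{R}^{n(n-1)}$. For a choice set $C\subseteq\mathcal{X}$ with $|C|\ge 2$ and $x\in C$, the probability of choosing $x$ from $C$ is $P_u(x\mid C)=\dfrac{\exp\big(\sum_{z\in C\setminus\{x\}}u_{xz}\big)}{\sum_{y\in C}\exp\big(\sum_{z\in C\setminus\{y\}}u_{yz}\big)}$. Adding the same constant to every $u_{xz}$ does not change any choice probability, so identifiability is understood up to such a shift. A dataset $\mathcal{D}$ is a finite list of pairs $(x_j,C_j)$ with $x_j\in C_j\subseteq\mathcal{X}$, $|C_j|\ge 2$ (item $x_j$ chosen from set $C_j$); $\mathcal{C}_{\mathcal{D}}$ denotes the collection of distinct sets $C_j$ occurring in $\mathcal{D}$. $\mathbf{1}$ is the all-ones vector. *)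

From HB Require Import structures.
From mathcomp Require Import all_boot all_order all_algebra.
From mathcomp Require Import reals.
From mathcomp Require Import sequences.
From mathcomp.analysis Require Import exp.
Set Implicit Arguments. Unset Strict Implicit. Unset Printing Implicit Defensive.
Import Order.TTheory GRing.Theory Num.Theory.
Local Open Scope ring_scope.

(* A CDM on the universe 'I_n: parameter u x z for x <> z (diagonal entries
   u x x are never used). *)
Definition cdm_param (R : realType) (n : nat) := 'I_n -> 'I_n -> R.

Definition cdm_prob (R : realType) (n : nat) (u : cdm_param R n)
    (x : 'I_n) (C : {set 'I_n}) : R :=
  expR (\sum_(z in C :\ x) u x z) /
  \sum_(y in C) expR (\sum_(z in C :\ y) u y z).

Definition dataset (n : nat) := seq ('I_n * {set 'I_n}).

Definition wf_dataset n (D : dataset n) : Prop :=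
  forall p, p \in D -> (p.1 \in p.2) /\ (2 <= #|p.2|)%N.

Definition choice_sets n (D : dataset n) : seq {set 'I_n} := undup (map snd D).

From HB Require Import structures.
From mathcomp Require Import all_boot all_order all_algebra.
From mathcomp Require Import reals.
From mathcomp Require Import sequences.
From mathcomp.analysis Require Import exp.
From mathcomp Require Import zify.
Import Order.TTheory GRing.Theory Num.Theory.
Local Open Scope ring_scope.

(* Let d := u' - u.  Equal choice probabilities on C say that the row sums
   \sum_(z in C :\ x) d x z take the same value for every x in C, namely the
   log-ratio of the two partition functions.  Comparing x and y on two sets
   of a size m, 2 < m < n, that differ only in w versus v gives
   d x w - d y w = d x v - d y v.  Consequently a set of size s containing x
   and w yields d w x - d x w = (s - 2) (d x z - d w z) for any third item z,
   and two distinct sizes s force d x z = d w z and d x w = d w x: d is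
   constant along columns and symmetric, hence constant off the diagonal. *)

Lemma exists_card_between {T : finType} {X Y : {set T}} {j : nat} :
  X \subset Y -> (#|X| <= j <= #|Y|)%N ->
  exists A : {set T}, [/\ X \subset A, A \subset Y & #|A| = j].
Proof.
move=> sXY /andP[leXj]; rewrite -(subnKC leXj).
elim: (j - #|X|)%N => [|i IH]; first by exists X; rewrite addn0.
rewrite addnS => ltiY; have [A [sXA sAY cardA]] := IH (ltnW ltiY).
have /card_gt0P[a] : (0 < #|Y :\: A|)%N.
  by rewrite cardsD (setIidPr sAY) cardA subn_gt0.
rewrite inE => /andP[aNA aY].
exists (a |: A); split; last by rewrite cardsU1 aNA cardA.
- exact: subset_trans sXA (subsetUr _ _).
- by rewrite subUset sub1set aY.
Qed.

Lemma subr_eq_of_addr {V : zmodType} (a b p q : V) :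
  a + p = b + q -> a - b = q - p.
Proof.
by move=> e; rewrite -(addrKA p a b) e [b + q]addrC [p + b]addrC addrKA.
Qed.

Section BalancedMatrices.

Context {R : numFieldType} {T : finType}.
Implicit Types (d : T -> T -> R) (C : {set T}).

Definition balanced d C :=
  {in C &, forall x y, \sum_(z in C :\ x) d x z = \sum_(z in C :\ y) d y z}.

Definition balanced_at d (s : nat) := forall C, #|C| = s -> balanced d C.

Lemma sum_setD1 (F : T -> R) C x :
  x \in C -> \sum_(z in C :\ x) F z = \sum_(z in C) F z - F x.
Proof. by move=> xC; rewrite (big_setD1 x xC) addrC addKr. Qed.

Lemma balanced_col_diff {d m} : (2 < m < #|T|)%N -> balanced_at d m ->
  forall x y w v, uniq [:: x; y; w; v] -> d x w - d y w = d x v - d y v.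
Proof.
move=> /andP[m_gt2 m_ltT] bal x y w v.
rewrite /= !inE !negb_or => /and4P[/and3P[xy xw xv] /andP[yw yv] wv _].
have sxy_wv : [set x; y] \subset ~: [set w; v].
  rewrite subsetC subUset !sub1set !inE !negb_or.
  by rewrite ![_ == x]eq_sym ![_ == y]eq_sym xw xv yw yv.
have card_between : (#|[set x; y]| <= m.-1 <= #|~: [set w; v]|)%N.
  by rewrite cards2 xy; have := cardsC [set w; v]; rewrite cards2 wv; lia.
have [A [sxyA sAwv cardA]] := exists_card_between sxy_wv card_between.
have wNA : w \notin A by apply/negP => /(subsetP sAwv); rewrite !inE eqxx.
have vNA : v \notin A by apply/negP => /(subsetP sAwv); rewrite !inE eqxx orbT.
have [xA yA] : x \in A /\ y \in A.
  by split; apply: (subsetP sxyA); rewrite !inE eqxx ?orbT.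
have balU a : a \notin A -> d x a - d y a =
    (\sum_(z in A) d y z - d y y) - (\sum_(z in A) d x z - d x x).
  move=> aNA; apply: subr_eq_of_addr; rewrite !addrA.
  have cardaA : #|a |: A| = m.
    by rewrite cardsU1 aNA cardA add1n (prednK (ltnW (ltnW m_gt2))).
  have := bal _ cardaA x y (setU1r a xA) (setU1r a yA).
  by rewrite !sum_setD1 ?(setU1r a xA) ?(setU1r a yA) // !big_setU1.
by rewrite !balU.
Qed.

Lemma balanced_sym_defect {d s} : (2 <= s <= #|T|)%N -> balanced_at d s ->
  (forall x y w v, uniq [:: x; y; w; v] -> d x w - d y w = d x v - d y v) ->
  forall x w z, uniq [:: x; w; z] -> d w x - d x w = (s - 2)%:R * (d x z - d w z).
Proof.
move=> /andP[s_ge2 s_leT] bal col_diff x w z0.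
rewrite /= !inE !negb_or => /and3P[/andP[xw xz0] wz0 _].
have card_between : (#|set0 : {set T}| <= s - 2 <= #|~: [set x; w]|)%N.
  by rewrite cards0; have := cardsC [set x; w]; rewrite cards2 xw; lia.
have [A [_ sAxw cardA]] := exists_card_between (sub0set _) card_between.
have xNA : x \notin A by apply/negP => /(subsetP sAxw); rewrite !inE eqxx.
have wNA : w \notin A by apply/negP => /(subsetP sAxw); rewrite !inE eqxx orbT.
have xNwA : x \notin w |: A by rewrite !inE negb_or xw xNA.
have cardC : #|x |: (w |: A)| = s by rewrite cardsU1 xNwA cardsU1 wNA cardA; lia.
have := bal _ cardC x w (setU11 _ _) (setU1r _ (setU11 _ _)).
rewrite !sum_setD1 ?setU11 ?(setU1r _ (setU11 _ _)) // !big_setU1 //=.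
have row_diff : \sum_(z in A) d x z - \sum_(z in A) d w z =
    (s - 2)%:R * (d x z0 - d w z0).
  rewrite -sumrB (eq_bigr (fun=> d x z0 - d w z0)) ?sumr_const ?cardA ?mulr_natl //.
  move=> z zA.
  have [-> // | zz0] := eqVneq z z0.
  have xz : x != z by apply: contraNneq xNA => ->.
  have wz : w != z by apply: contraNneq wNA => ->.
  by apply: col_diff; rewrite /= !inE !negb_or xw xz xz0 wz wz0 zz0.
move=> bal_xw; rewrite -row_diff; apply: subr_eq_of_addr; move: bal_xw.
by rewrite [d x x + _]addrC [d w w + _]addrC !addrA !addrK => ->.
Qed.

Lemma offdiag_const {d} :
  (forall x y z, x != z -> y != z -> d x z = d y z) ->
  (forall x y, x != y -> d x y = d y x) ->
  exists alpha, forall x z, x != z -> d x z = alpha.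
Proof.
move=> col sym.
have row x y z : y != x -> z != x -> d x y = d x z.
  move=> yx zx; have [-> // | yz] := eqVneq y z.
  by rewrite sym 1?eq_sym // (col y z x) // sym.
case: (pickP (fun p : T * T => p.1 != p.2)) => [[a b] /= ab | none]; last first.
  by exists 0 => x z xz; have := none (x, z); rewrite /= xz.
exists (d a b) => x z xz.
have [za | za] := eqVneq z a.
- by rewrite za in xz *; rewrite sym // (row a x b) // eq_sym.
- transitivity (d a z); first by apply: col; rewrite // eq_sym.
  by apply: row; rewrite // eq_sym.
Qed.

Lemma balanced_two_sizes_offdiag_const {d m l} :
  (2 < m < #|T|)%N -> (2 <= l <= #|T|)%N -> m != l ->
  balanced_at d m -> balanced_at d l ->
  exists alpha, forall x z, x != z -> d x z = alpha.
Proof.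
move=> m_range l_range ml bal_m bal_l.
have col_diff := balanced_col_diff m_range bal_m.
have m_range' : (2 <= m <= #|T|)%N by lia.
have col_sym x w z : uniq [:: x; w; z] -> d x z = d w z /\ d x w = d w x.
  move=> xwz.
  have em := balanced_sym_defect m_range' bal_m col_diff _ _ _ xwz.
  have el := balanced_sym_defect l_range bal_l col_diff _ _ _ xwz.
  have : ((m - 2)%:R - (l - 2)%:R) * (d x z - d w z) = 0.
    by rewrite mulrBl -em -el subrr.
  have ml2 : (m - 2)%:R - (l - 2)%:R != 0 :> R by rewrite subr_eq0 eqr_nat; lia.
  move/eqP; rewrite mulf_eq0 (negbTE ml2) subr_eq0 => /eqP col_eq.
  split => //; apply/eqP.
  by rewrite -subr_eq0 -opprB oppr_eq0 em col_eq subrr mulr0.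
apply: offdiag_const => [x y z xz yz | x y xy].
  have [-> // | xy] := eqVneq x y.
  by case: (col_sym x y z); rewrite //= !inE !negb_or xy xz yz.
have : (0 < #|~: [set x; y]|)%N.
  by have := cardsC [set x; y]; rewrite cards2 xy; lia.
case/card_gt0P => z; rewrite !inE !negb_or => /andP[zx zy].
case: (col_sym x y z) => //.
by rewrite /= !inE !negb_or xy (eq_sym x z) (eq_sym y z) zx zy.
Qed.

End BalancedMatrices.

Section CDM.

Context {R : realType} {n : nat}.
Implicit Types (u : cdm_param R n) (C : {set 'I_n}).

Definition cdm_partition u C : R :=
  \sum_(y in C) expR (\sum_(z in C :\ y) u y z).

Lemma cdm_partition_gt0 u C x : x \in C -> 0 < cdm_partition u C.
Proof.
move=> xC; rewrite /cdm_partition (big_setD1 x xC) /=.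
by rewrite ltr_wpDr ?expR_gt0 // sumr_ge0 // => y _; exact: expR_ge0.
Qed.

Lemma cdm_prob_eq_expR_ratio u u' C x : x \in C ->
  cdm_prob u x C = cdm_prob u' x C ->
  expR (\sum_(z in C :\ x) (u' x z - u x z)) =
  cdm_partition u' C / cdm_partition u C.
Proof.
move=> xC.
rewrite /cdm_prob -/(cdm_partition u C) -/(cdm_partition u' C) sumrB expRB.
have Z_neq0 := lt0r_neq0 (cdm_partition_gt0 u _ _ xC).
have Z'_neq0 := lt0r_neq0 (cdm_partition_gt0 u' _ _ xC).
move/eqP; rewrite !eqr_div ?expR_eq0 // => /eqP same.
by apply/eqP; rewrite eqr_div ?expR_eq0 // -same mulrC.
Qed.

Lemma cdm_prob_eq_balanced u u' C :
  {in C, forall x, cdm_prob u x C = cdm_prob u' x C} ->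
  balanced (fun x z => u' x z - u x z) C.
Proof.
move=> same x y xC yC; apply: expR_inj.
by rewrite !cdm_prob_eq_expR_ratio ?same.
Qed.

End CDM.

Theorem theorem1 (R : realType) (n : nat) (D : dataset n) (k k' : nat) :
  wf_dataset D ->
  k != k' ->
  (2 <= k <= n)%N -> (2 <= k' <= n)%N ->
  (k \notin [:: 2%N; n]) || (k' \notin [:: 2%N; n]) ->
  (forall C : {set 'I_n}, #|C| = k -> C \in choice_sets D) ->
  (forall C : {set 'I_n}, #|C| = k' -> C \in choice_sets D) ->
  forall u u' : cdm_param R n,
    (forall C, C \in choice_sets D -> forall x, x \in C ->
       cdm_prob u x C = cdm_prob u' x C) ->
    exists alpha : R, forall x z : 'I_n, x != z -> u' x z - u x z = alpha.
Proof.
move=> _ neq_kk' k_range k'_range k_or_k' Dk Dk' u u' same_prob.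
have bal s : (forall C : {set 'I_n}, #|C| = s -> C \in choice_sets D) ->
    balanced_at (fun x z => u' x z - u x z) s.
  by move=> Ds C /Ds CD; apply: cdm_prob_eq_balanced => x; exact: same_prob.
have inner s : (2 <= s <= n)%N -> s \notin [:: 2%N; n] -> (2 < s < #|'I_n|)%N.
  by rewrite card_ord !inE; lia.
have sizes s : (2 <= s <= n)%N -> (2 <= s <= #|'I_n|)%N by rewrite card_ord.
case/orP: k_or_k' => [/(inner k k_range) | /(inner k' k'_range)] s_inner.
- exact: balanced_two_sizes_offdiag_const s_inner (sizes k' k'_range) neq_kk'
    (bal k Dk) (bal k' Dk').
- rewrite eq_sym in neq_kk'.
  exact: balanced_two_sizes_offdiag_const s_inner (sizes k k_range) neq_kk'
    (bal k' Dk') (bal k Dk).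
Qed.
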